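(* For all $s,t\in\Lambda^\infty$: if $s$ has no head normal form and $t\to^\infty_{\beta\bot}s$, then $t$ has no head normal form.
   Context: Fix an infinite set $V$ of variables and a set $C$ of constants with $V\cap C=\emptyset$, containing a distinguished constant $\bot$. $\Lambda^\infty$ is the set of infinitary lambda-terms: all finite and infinite terms generated coinductively by $t ::= c\mid x\mid t\,t\mid\lambda x.t$, identified up to $\alpha$-equivalence; $s[t/x]$ is capture-avoiding substitution; $\equiv$ is identity; an atom is a variable or constant. For $R\subseteq\Lambda^\infty\times\Lambda^\infty$, the compatible closure $\to_R$ is the least relation with $(s,t)\in R\Rightarrow s\to_R t$ and $s\to_R s'\Rightarrow st\to_R s't,\ ts\to_R ts',\ \lambda x.s\to_R\lambda x.s'$. $\to_\beta$ is the compatible closure of $R_\beta=\{((\lambda x.s)t,s[t/x])\}$. A term is in head normal form (hnf) if it is $\lambda x_1\ldots x_m.\,a\,t_1\ldots t_n$ ($m,n\ge0$, $a$ an atom, $a\not\equiv\bot$); $t$ has a hnf if $t\to^*_\beta t'$ for some $t'$ in hnf. $R_\bot=\{(t,\bot)\mid t\text{ has no hnf}, t\not\equiv\bot\}$; $\to_{\beta\bot}$ is the compatible closure of $R_\beta\cup R_\bot$. The infinitary closure $\to^\infty_{\beta\bot}$ is the greatest relation such that whenever $s\to^\infty_{\beta\bot}t$ (writing $\to^*$ for the reflexive-transitive closure of $\to_{\beta\bot}$): $t\equiv a$ atom and $s\to^*a$; or $t\equiv t_1't_2'$, $s\to^*t_1t_2$, $t_i\to^\infty_{\beta\bot}t_i'$;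 or $t\equiv\lambda x.r'$, $s\to^*\lambda x.r$, $r\to^\infty_{\beta\bot}r'$. *)

(* Infinitary lambda-terms as a coinductive type with de Bruijn
   indices (alpha-equivalence is built in); identity (≡) is bisimilarity. *)
From Stdlib Require Import Arith.

Set Implicit Arguments.

Section InfLambda.

Context (C : Type) (bot : C).

CoInductive term : Type :=
| Const : C -> term
| Var : nat -> term
| App : term -> term -> term
| Lam : term -> term.

CoInductive bisim : term -> term -> Prop :=
| bis_const c : bisim (Const c) (Const c)
| bis_var n : bisim (Var n) (Var n)
| bis_app s t s' t' : bisim s s' -> bisim t t' -> bisim (App s t) (App s' t')
| bis_lam s s' : bisim s s' -> bisim (Lam s) (Lam s').

CoFixpoint lift (k : nat) (t : term) : term :=
  match t with
  | Const c => Const c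
  | Var n => if Nat.ltb n k then Var n else Var (S n)
  | App a b => App (lift k a) (lift k b)
  | Lam a => Lam (lift (S k) a)
  end.

(* capture-avoiding substitution of u (already lifted k times) for index k *)
CoFixpoint subst (k : nat) (u : term) (t : term) : term :=
  match t with
  | Const c => Const c
  | Var n => if Nat.ltb n k then Var n
             else if Nat.eqb n k then u else Var (pred n)
  | App a b => App (subst k u a) (subst k u b)
  | Lam a => Lam (subst (S k) (lift 0 u) a)
  end.

Definition R_beta (u v : term) : Prop :=
  exists s t, bisim u (App (Lam s) t) /\ bisim v (subst 0 t s).

Inductive compat (R : term -> term -> Prop) : term -> term -> Prop :=
| cp_base s t : R s t -> compat R s t
| cp_appl s s' t t' : compat R s s' -> bisim t t' -> compat R (App s t) (App s' t')
| cp_appr s s' t t' : bisim t t' -> compat R s s' -> compat R (App t s) (App t' s')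
| cp_lam s s' : compat R s s' -> compat R (Lam s) (Lam s').

Inductive star (R : term -> term -> Prop) : term -> term -> Prop :=
| star_refl s t : bisim s t -> star R s t
| star_step s u t : R s u -> star R u t -> star R s t.

Definition beta_step := compat R_beta.

Inductive head_app : term -> Prop :=
| ha_var n : head_app (Var n)
| ha_const c : c <> bot -> head_app (Const c)
| ha_app s t : head_app s -> head_app (App s t).

Inductive is_hnf : term -> Prop :=
| hnf_head t : head_app t -> is_hnf t
| hnf_lam s : is_hnf s -> is_hnf (Lam s).

Definition has_hnf (t : term) : Prop :=
  exists t', star beta_step t t' /\ is_hnf t'.

Definition R_bot (u v : term) : Prop :=
  ~ has_hnf u /\ ~ bisim u (Const bot) /\ bisim v (Const bot).

Definition beta_bot_step := compat (fun u v => R_beta u v \/ R_bot u v).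

Definition beta_bot_star := star beta_bot_step.

CoInductive inf_red : term -> term -> Prop :=
| ir_var s n : beta_bot_star s (Var n) -> inf_red s (Var n)
| ir_const s c : beta_bot_star s (Const c) -> inf_red s (Const c)
| ir_app s t1 t2 t1' t2' :
    beta_bot_star s (App t1 t2) -> inf_red t1 t1' -> inf_red t2 t2' ->
    inf_red s (App t1' t2')
| ir_lam s r r' :
    beta_bot_star s (Lam r) -> inf_red r r' -> inf_red s (Lam r').

End InfLambda.

From Stdlib Require Import Arith Lia List Permutation Setoid Morphisms.
Import ListNotations.
Set Implicit Arguments.

(* Head normalisable terms are exactly the terms typable with non-idempotent
   intersection types, and the size of a derivation bounds the length of head
   reduction.  Beta-expansion reflects typability; beta_bot-reduction preserves
   derivations without increasing their size, because an R_bot step can only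
   contract an untyped subterm (typed terms have a head normal form).  A
   derivation for t is finite, so along t ->^infty s it inspects only finitely
   many layers of the infinitary reduction, and induction on its size yields a
   derivation for s. *)

(** * Multiset contexts *)

Inductive ty : Type := Base | Arr (M : list ty) (s : ty).

(* A context gives each de Bruijn index a multiset of types, represented by a
   list taken up to permutation. [ctx_del] and [ctx_ins] follow [subst] and [lift]. *)
Definition ctx := nat -> list ty.
Definition ctx_eq (G H : ctx) : Prop := forall k, Permutation (G k) (H k).
Definition ctx_empty : ctx := fun _ => [].
Definition ctx_add (G H : ctx) : ctx := fun k => G k ++ H k.
Definition ctx_single (n : nat) (s : ty) : ctx := fun k => if Nat.eqb k n then [s] else [].
Definition ctx_tail (G : ctx) : ctx := fun k => G (S k).
Definition ctx_del (j : nat) (G : ctx) : ctx := fun k => if Nat.ltb k j then G k else G (S k).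
Definition ctx_ins (j : nat) (G : ctx) : ctx :=
  fun k => if Nat.ltb k j then G k else if Nat.eqb k j then [] else G (pred k).

#[local] Instance ctx_eq_equiv : Equivalence ctx_eq.
Proof.
  split.
  - intros G k; reflexivity.
  - intros G H E k; symmetry; apply E.
  - intros G H I E F k; etransitivity; [apply E|apply F].
Qed.

#[local] Instance ctx_add_proper : Proper (ctx_eq ==> ctx_eq ==> ctx_eq) ctx_add.
Proof. intros G G' E H H' F k; apply Permutation_app; [apply E|apply F]. Qed.

#[local] Instance ctx_tail_proper : Proper (ctx_eq ==> ctx_eq) ctx_tail.
Proof. intros G G' E k; apply E. Qed.

Ltac index_cases :=
  repeat match goal with
  | |- context [Nat.ltb ?a ?b] => destruct (Nat.ltb_spec a b)
  | |- context [Nat.eqb ?a ?b] => destruct (Nat.eqb_spec a b)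
  end;
  first [ reflexivity
        | exfalso; lia
        | match goal with |- Permutation (?G ?a) (?G ?b) => replace b with a by lia; reflexivity end ].

#[local] Instance ctx_del_proper j : Proper (ctx_eq ==> ctx_eq) (ctx_del j).
Proof. intros G G' E k; unfold ctx_del; destruct (k <? j); apply E. Qed.

#[local] Instance ctx_ins_proper j : Proper (ctx_eq ==> ctx_eq) (ctx_ins j).
Proof.
  intros G G' E k; unfold ctx_ins.
  destruct (k <? j); [apply E|destruct (k =? j); [reflexivity|apply E]].
Qed.

Lemma ctx_add_comm G H : ctx_eq (ctx_add G H) (ctx_add H G).
Proof. intro k; apply Permutation_app_comm. Qed.

Lemma ctx_add_assoc G H I : ctx_eq (ctx_add G (ctx_add H I)) (ctx_add (ctx_add G H) I).
Proof. intro k; unfold ctx_add; rewrite app_assoc; reflexivity. Qed.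

Lemma ctx_add_interchange A B C D :
  ctx_eq (ctx_add (ctx_add A B) (ctx_add C D)) (ctx_add (ctx_add A C) (ctx_add B D)).
Proof.
  intro k; unfold ctx_add; rewrite <- !app_assoc; apply Permutation_app_head.
  rewrite !app_assoc; apply Permutation_app_tail, Permutation_app_comm.
Qed.

Lemma ctx_add_empty_l G : ctx_eq (ctx_add ctx_empty G) G.
Proof. intro k; reflexivity. Qed.

Lemma ctx_add_empty_r G : ctx_eq (ctx_add G ctx_empty) G.
Proof. intro k; unfold ctx_add, ctx_empty; rewrite app_nil_r; reflexivity. Qed.

Lemma ctx_del_add j G H : ctx_eq (ctx_del j (ctx_add G H)) (ctx_add (ctx_del j G) (ctx_del j H)).
Proof. intro k; unfold ctx_del, ctx_add; destruct (k <? j); reflexivity. Qed.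

Lemma ctx_ins_add j G H : ctx_eq (ctx_ins j (ctx_add G H)) (ctx_add (ctx_ins j G) (ctx_ins j H)).
Proof. intro k; unfold ctx_ins, ctx_add; index_cases. Qed.

Lemma ctx_del_empty j : ctx_eq (ctx_del j ctx_empty) ctx_empty.
Proof. intro k; unfold ctx_del; index_cases. Qed.

Lemma ctx_ins_empty j : ctx_eq (ctx_ins j ctx_empty) ctx_empty.
Proof. intro k; unfold ctx_ins; index_cases. Qed.

Lemma ctx_tail_del_S j G : ctx_eq (ctx_tail (ctx_del (S j) G)) (ctx_del j (ctx_tail G)).
Proof. intro k; unfold ctx_tail, ctx_del; index_cases. Qed.

Lemma ctx_tail_ins_S j G : ctx_eq (ctx_tail (ctx_ins (S j) G)) (ctx_ins j (ctx_tail G)).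
Proof. intro k; unfold ctx_tail, ctx_ins; index_cases. Qed.

Lemma ctx_ins_single_lt j n s : n < j -> ctx_eq (ctx_ins j (ctx_single n s)) (ctx_single n s).
Proof. intros H k; unfold ctx_ins, ctx_single; index_cases. Qed.

Lemma ctx_ins_single_ge j n s : j <= n -> ctx_eq (ctx_ins j (ctx_single n s)) (ctx_single (S n) s).
Proof. intros H k; unfold ctx_ins, ctx_single; index_cases. Qed.

Lemma ctx_del_single_lt j n s : n < j -> ctx_eq (ctx_del j (ctx_single n s)) (ctx_single n s).
Proof. intros H k; unfold ctx_del, ctx_single; index_cases. Qed.

Lemma ctx_del_single_gt j n s : j < n -> ctx_eq (ctx_del j (ctx_single n s)) (ctx_single (pred n) s).
Proof. intros H k; unfold ctx_del, ctx_single; index_cases. Qed.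

Lemma ctx_del_single_eq j s : ctx_eq (ctx_del j (ctx_single j s)) ctx_empty.
Proof. intro k; unfold ctx_del, ctx_single; index_cases. Qed.

Lemma ctx_tail_add G H : ctx_eq (ctx_tail (ctx_add G H)) (ctx_add (ctx_tail G) (ctx_tail H)).
Proof. intro k; reflexivity. Qed.

Lemma ctx_tail_ins_0 G : ctx_eq (ctx_tail (ctx_ins 0 G)) G.
Proof. intro k; reflexivity. Qed.

Lemma ctx_single_other x y s : y <> x -> ctx_single x s y = [].
Proof. intro H; unfold ctx_single; destruct (Nat.eqb_spec y x); congruence. Qed.

Lemma ctx_single_same x s : ctx_single x s x = [s].
Proof. unfold ctx_single; rewrite Nat.eqb_refl; reflexivity. Qed.

Lemma ctx_del_0 G : ctx_eq (ctx_del 0 G) (ctx_tail G).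
Proof. intro k; reflexivity. Qed.

(** * Typing *)

Section Typing.
Context (C : Type) (bot : C).
Notation term := (term C).

Definition term_unfold (t : term) : term :=
  match t with Const c => Const c | Var _ n => Var _ n | App a b => App a b | Lam a => Lam a end.

Lemma term_unfold_eq t : t = term_unfold t.
Proof. destruct t; reflexivity. Qed.

Lemma lift_var k n : lift k (Var _ n) = (if Nat.ltb n k then Var _ n else Var _ (S n) : term).
Proof. rewrite (term_unfold_eq (lift k _)); simpl; destruct (n <? k); reflexivity. Qed.

Lemma lift_const k c : lift k (Const c : term) = Const c.
Proof. rewrite (term_unfold_eq (lift k _)); reflexivity. Qed.

Lemma lift_app k a b : lift k (App a b : term) = App (lift k a) (lift k b).
Proof. rewrite (term_unfold_eq (lift k _)); reflexivity. Qed.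

Lemma lift_lam k a : lift k (Lam a : term) = Lam (lift (S k) a).
Proof. rewrite (term_unfold_eq (lift k _)); reflexivity. Qed.

Lemma subst_var k u n : subst k u (Var _ n) =
  (if Nat.ltb n k then Var _ n else if Nat.eqb n k then u else Var _ (pred n) : term).
Proof.
  rewrite (term_unfold_eq (subst k u _)); simpl.
  destruct (n <? k); [reflexivity|]; destruct (n =? k); [symmetry; apply term_unfold_eq|reflexivity].
Qed.

Lemma subst_const k u c : subst k u (Const c : term) = Const c.
Proof. rewrite (term_unfold_eq (subst k u _)); reflexivity. Qed.

Lemma subst_app k u a b : subst k u (App a b : term) = App (subst k u a) (subst k u b).
Proof. rewrite (term_unfold_eq (subst k u _)); reflexivity. Qed.

Lemma subst_lam k u a : subst k u (Lam a : term) = Lam (subst (S k) (lift 0 u) a).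
Proof. rewrite (term_unfold_eq (subst k u _)); reflexivity. Qed.

Lemma bisim_refl (t : term) : bisim t t.
Proof. revert t; cofix CH; intro t; destruct t; constructor; apply CH. Qed.

Lemma bisim_sym (t u : term) : bisim t u -> bisim u t.
Proof. revert t u; cofix CH; intros t u H; destruct H; constructor; apply CH; assumption. Qed.

(* Non-idempotent intersection types: [typ G t s n] says that [t] has type [s]
   in [G] by a derivation of size at most [n]; [mtyp G u M n] types [u] once
   for each element of the multiset [M].  An argument typed by the empty
   multiset is never inspected. *)
Inductive typ : ctx -> term -> ty -> nat -> Prop :=
| T_var G x s n : ctx_eq G (ctx_single x s) -> typ G (Var _ x) s n
| T_const G c s n : c <> bot -> ctx_eq G ctx_empty -> typ G (Const c) s n
| T_lam G G' a M s m n : typ G' a s m -> Permutation M (G' 0) -> ctx_eq G (ctx_tail G') ->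
    m < n -> typ G (Lam a) (Arr M s) n
| T_app G G1 G2 f u M s m1 m2 n : typ G1 f (Arr M s) m1 -> mtyp G2 u M m2 ->
    ctx_eq G (ctx_add G1 G2) -> m1 + m2 < n -> typ G (App f u) s n
with mtyp : ctx -> term -> list ty -> nat -> Prop :=
| MT_nil G u n : ctx_eq G ctx_empty -> mtyp G u [] n
| MT_cons G G1 G2 u s M m1 m2 n : typ G1 u s m1 -> mtyp G2 u M m2 ->
    ctx_eq G (ctx_add G1 G2) -> m1 + m2 <= n -> mtyp G u (s :: M) n.

Scheme typ_ind2 := Induction for typ Sort Prop with mtyp_ind2 := Induction for mtyp Sort Prop.
Combined Scheme typ_mut from typ_ind2, mtyp_ind2.

Lemma typ_ctx_eq G H t s n : typ G t s n -> ctx_eq G H -> typ H t s n.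
Proof.
  intros D E; destruct D;
    [apply T_var|apply T_const|eapply T_lam|eapply T_app]; eauto; rewrite <- E; assumption.
Qed.

Lemma mtyp_ctx_eq G H u M n : mtyp G u M n -> ctx_eq G H -> mtyp H u M n.
Proof. intros D E; destruct D; [apply MT_nil|eapply MT_cons]; eauto; rewrite <- E; assumption. Qed.

#[local] Instance typ_proper : Proper (ctx_eq ==> eq ==> eq ==> eq ==> iff) typ.
Proof. intros G H E t _ <- s _ <- n _ <-; split; intro D; eapply typ_ctx_eq; eauto; symmetry; exact E. Qed.

#[local] Instance mtyp_proper : Proper (ctx_eq ==> eq ==> eq ==> eq ==> iff) mtyp.
Proof. intros G H E u _ <- M _ <- n _ <-; split; intro D; eapply mtyp_ctx_eq; eauto; symmetry; exact E. Qed.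

Lemma typ_mono G t s n m : typ G t s n -> n <= m -> typ G t s m.
Proof. intros D L; destruct D; [apply T_var|apply T_const|eapply T_lam|eapply T_app]; eauto; lia. Qed.

Lemma mtyp_mono G u M n m : mtyp G u M n -> n <= m -> mtyp G u M m.
Proof. intros D L; destruct D; [apply MT_nil|eapply MT_cons]; eauto; lia. Qed.

Lemma mtyp_nil_inv G u n : mtyp G u [] n -> ctx_eq G ctx_empty.
Proof. intro D; inversion D; subst; assumption. Qed.

Lemma mtyp_cons_inv G u s M n : mtyp G u (s :: M) n ->
  exists G1 G2 n1 n2, typ G1 u s n1 /\ mtyp G2 u M n2 /\ ctx_eq G (ctx_add G1 G2) /\ n1 + n2 <= n.
Proof. intro D; inversion D; subst; eauto 10. Qed.

Lemma typ_var_inv G x s n : typ G (Var _ x) s n -> ctx_eq G (ctx_single x s).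
Proof. intro D; inversion D; subst; assumption. Qed.

Lemma typ_lam_inv G a s n : typ G (Lam a) s n ->
  exists G' M s' n', s = Arr M s' /\ typ G' a s' n' /\ Permutation M (G' 0) /\
    ctx_eq G (ctx_tail G') /\ n' < n.
Proof. intro D; inversion D; subst; eauto 10. Qed.

Lemma typ_app_inv G f u s n : typ G (App f u) s n ->
  exists G1 G2 M n1 n2, typ G1 f (Arr M s) n1 /\ mtyp G2 u M n2 /\
    ctx_eq G (ctx_add G1 G2) /\ n1 + n2 < n.
Proof. intro D; inversion D; subst; eauto 10. Qed.

Lemma mtyp_single G u s n : typ G u s n -> mtyp G u [s] n.
Proof.
  intro D; eapply MT_cons with (m2 := 0); [eassumption|apply MT_nil; reflexivity| |lia].
  symmetry; apply ctx_add_empty_r.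
Qed.

Lemma mtyp_single_inv G u s n : mtyp G u [s] n -> typ G u s n.
Proof.
  intro D; apply mtyp_cons_inv in D as (G1 & G2 & n1 & n2 & D1 & D2 & E & L).
  apply mtyp_nil_inv in D2; eapply typ_mono; [eapply typ_ctx_eq; [exact D1|]|lia].
  rewrite E, D2; symmetry; apply ctx_add_empty_r.
Qed.

Lemma mtyp_perm M M' : Permutation M M' -> forall G u n, mtyp G u M n -> mtyp G u M' n.
Proof.
  induction 1 as [|s M M' _ IH|s s' M|M M' M'' _ IH1 _ IH2]; intros G u n D; auto.
  - apply mtyp_cons_inv in D as (G1 & G2 & n1 & n2 & D1 & D2 & E & L); eapply MT_cons; eauto.
  - apply mtyp_cons_inv in D as (G1 & G2 & n1 & n2 & D1 & D2 & E & L).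
    apply mtyp_cons_inv in D2 as (G3 & G4 & n3 & n4 & D3 & D4 & E' & L').
    eapply MT_cons with (G1 := G3) (G2 := ctx_add G1 G4) (m2 := n1 + n4); [exact D3| | |lia].
    + eapply MT_cons; [exact D1|exact D4|reflexivity|lia].
    + rewrite E, E', !ctx_add_assoc, (ctx_add_comm G1 G3); reflexivity.
Qed.

Lemma mtyp_perm_nil G u M n : mtyp G u M n -> Permutation M [] -> ctx_eq G ctx_empty.
Proof. intros D P; exact (mtyp_nil_inv (mtyp_perm P D)). Qed.

Lemma mtyp_app G1 G2 u M1 M2 n1 n2 : mtyp G1 u M1 n1 -> mtyp G2 u M2 n2 ->
  mtyp (ctx_add G1 G2) u (M1 ++ M2) (n1 + n2).
Proof.
  revert G1 n1; induction M1 as [|s M1 IH]; intros G1 n1 D D2; simpl.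
  - apply mtyp_nil_inv in D; eapply mtyp_ctx_eq; [eapply mtyp_mono; [eassumption|lia]|].
    rewrite D; symmetry; apply ctx_add_empty_l.
  - apply mtyp_cons_inv in D as (G3 & G4 & n3 & n4 & D3 & D4 & E & L).
    eapply MT_cons; [eassumption|apply IH; eassumption| |lia].
    rewrite E; symmetry; apply ctx_add_assoc.
Qed.

Lemma mtyp_app_inv M1 M2 G u n : mtyp G u (M1 ++ M2) n ->
  exists G1 G2 n1 n2, mtyp G1 u M1 n1 /\ mtyp G2 u M2 n2 /\ ctx_eq G (ctx_add G1 G2) /\ n1 + n2 <= n.
Proof.
  revert G n; induction M1 as [|s M1 IH]; intros G n D; simpl in *.
  - exists ctx_empty, G, 0, n; repeat split; auto; [apply MT_nil; reflexivity|].
    symmetry; apply ctx_add_empty_l.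
  - apply mtyp_cons_inv in D as (G1 & G2 & n1 & n2 & D1 & D2 & E & L).
    destruct (IH _ _ D2) as (G3 & G4 & m1 & m2 & D3 & D4 & E' & L').
    exists (ctx_add G1 G3), G4, (n1 + m1), m2; repeat split; auto; [| |lia].
    + eapply MT_cons; eauto; reflexivity.
    + rewrite E, E'; apply ctx_add_assoc.
Qed.

Lemma typ_bisim_mut :
  (forall G t s n, typ G t s n -> forall t', bisim t t' -> typ G t' s n) /\
  (forall G u M n, mtyp G u M n -> forall u', bisim u u' -> mtyp G u' M n).
Proof.
  apply typ_mut; intros *.
  - intros E t' B; inversion B; subst; apply T_var; auto.
  - intros Hc E t' B; inversion B; subst; apply T_const; auto.
  - intros D IH P E L t' B; inversion B; subst; eapply T_lam; eauto.
  - intros D1 IH1 D2 IH2 E L t' B; inversion B; subst; eapply T_app; eauto.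
  - intros E u' B; apply MT_nil; auto.
  - intros D1 IH1 D2 IH2 E L u' B; eapply MT_cons; eauto.
Qed.

Lemma typ_bisim G t t' s n : bisim t t' -> typ G t s n -> typ G t' s n.
Proof. intros B D; exact (proj1 typ_bisim_mut _ _ _ _ D _ B). Qed.

Lemma mtyp_bisim G u u' M n : bisim u u' -> mtyp G u M n -> mtyp G u' M n.
Proof. intros B D; exact (proj2 typ_bisim_mut _ _ _ _ D _ B). Qed.


Lemma lift_eq_var j (t : term) x : lift j t = Var _ x ->
  exists y, t = Var _ y /\ x = if y <? j then y else S y.
Proof.
  destruct t as [c|y|a b|a]; rewrite ?lift_const, ?lift_var, ?lift_app, ?lift_lam; intro H;
    try discriminate; exists y; destruct (y <? j); injection H as <-; auto.
Qed.

Lemma lift_eq_const j (t : term) c : lift j t = Const c -> t = Const c.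
Proof.
  destruct t as [c'|y|a b|a]; rewrite ?lift_const, ?lift_var, ?lift_app, ?lift_lam; intro H;
    [congruence|destruct (y <? j)|..]; discriminate.
Qed.

Lemma lift_eq_app j (t : term) a b : lift j t = App a b ->
  exists a' b', t = App a' b' /\ a = lift j a' /\ b = lift j b'.
Proof.
  destruct t as [c|y|a' b'|a']; rewrite ?lift_const, ?lift_var, ?lift_app, ?lift_lam; intro H;
    [|destruct (y <? j)|injection H as <- <-; eauto|]; discriminate.
Qed.

Lemma lift_eq_lam j (t : term) a : lift j t = Lam a -> exists a', t = Lam a' /\ a = lift (S j) a'.
Proof.
  destruct t as [c|y|a' b'|a']; rewrite ?lift_const, ?lift_var, ?lift_app, ?lift_lam; intro H;
    [| destruct (y <? j)| |injection H as <-; eauto]; discriminate.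
Qed.

(** * Weakening and substitution *)

Lemma typ_lift_mut :
  (forall G t s n, typ G t s n -> forall j, typ (ctx_ins j G) (lift j t) s n) /\
  (forall G u M n, mtyp G u M n -> forall j, mtyp (ctx_ins j G) (lift j u) M n).
Proof.
  apply typ_mut; intros *.
  - intros E j; rewrite lift_var, E.
    destruct (Nat.ltb_spec x j); apply T_var;
      [rewrite ctx_ins_single_lt by lia|rewrite ctx_ins_single_ge by lia]; reflexivity.
  - intros Hc E j; rewrite lift_const, E, ctx_ins_empty; apply T_const; auto; reflexivity.
  - intros D IH P E L j; rewrite lift_lam.
    eapply T_lam; [apply IH|exact P|rewrite ctx_tail_ins_S, E; reflexivity|exact L].
  - intros D1 IH1 D2 IH2 E L j; rewrite lift_app.
    eapply T_app; [apply IH1|apply IH2|rewrite E; apply ctx_ins_add|exact L].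
  - intros E j; rewrite E, ctx_ins_empty; apply MT_nil; reflexivity.
  - intros D1 IH1 D2 IH2 E L j.
    eapply MT_cons; [apply IH1|apply IH2|rewrite E; apply ctx_ins_add|exact L].
Qed.

Lemma mtyp_lift j G u M n : mtyp G u M n -> mtyp (ctx_ins j G) (lift j u) M n.
Proof. intro D; exact (proj2 typ_lift_mut _ _ _ _ D j). Qed.

Lemma typ_unlift_mut :
  (forall G t s n, typ G t s n -> forall j t0, t = lift j t0 ->
     exists G0, ctx_eq G (ctx_ins j G0) /\ typ G0 t0 s n) /\
  (forall G u M n, mtyp G u M n -> forall j u0, u = lift j u0 ->
     exists G0, ctx_eq G (ctx_ins j G0) /\ mtyp G0 u0 M n).
Proof.
  apply typ_mut; intros *.
  - intros E j t0 H; symmetry in H; apply lift_eq_var in H as (y & -> & ->).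
    exists (ctx_single y s); split; [|apply T_var; reflexivity].
    rewrite E; destruct (Nat.ltb_spec y j);
      [rewrite ctx_ins_single_lt by lia|rewrite ctx_ins_single_ge by lia]; reflexivity.
  - intros Hc E j t0 H; symmetry in H; apply lift_eq_const in H as ->.
    exists ctx_empty; split; [rewrite E, ctx_ins_empty; reflexivity|apply T_const; auto; reflexivity].
  - intros D IH P E L j t0 H; symmetry in H; apply lift_eq_lam in H as (a' & -> & ->).
    destruct (IH _ _ eq_refl) as (G0 & E0 & D0).
    exists (ctx_tail G0); split; [rewrite E, E0, ctx_tail_ins_S; reflexivity|].
    eapply T_lam; [exact D0|rewrite P; apply (E0 0)|reflexivity|exact L].
  - intros D1 IH1 D2 IH2 E L j t0 H; symmetry in H; apply lift_eq_app in H as (f' & u' & -> & -> & ->).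
    destruct (IH1 _ _ eq_refl) as (G3 & E3 & D3); destruct (IH2 _ _ eq_refl) as (G4 & E4 & D4).
    exists (ctx_add G3 G4); split; [rewrite E, E3, E4, ctx_ins_add; reflexivity|].
    eapply T_app; eauto; reflexivity.
  - intros E j u0 H; exists ctx_empty; split; [rewrite E, ctx_ins_empty; reflexivity|].
    apply MT_nil; reflexivity.
  - intros D1 IH1 D2 IH2 E L j u0 H.
    destruct (IH1 _ _ H) as (G3 & E3 & D3); destruct (IH2 _ _ H) as (G4 & E4 & D4).
    exists (ctx_add G3 G4); split; [rewrite E, E3, E4, ctx_ins_add; reflexivity|].
    eapply MT_cons; eauto; reflexivity.
Qed.

Lemma mtyp_unlift j G u M n : mtyp G (lift j u) M n ->
  exists G0, ctx_eq G (ctx_ins j G0) /\ mtyp G0 u M n.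
Proof. intro D; exact (proj2 typ_unlift_mut _ _ _ _ D j u eq_refl). Qed.

Lemma typ_subst_mut :
  (forall G t s n, typ G t s n -> forall k v D p, mtyp D v (G k) p ->
      typ (ctx_add (ctx_del k G) D) (subst k v t) s (n + p)) /\
  (forall G u M n, mtyp G u M n -> forall k v D p, mtyp D v (G k) p ->
      mtyp (ctx_add (ctx_del k G) D) (subst k v u) M (n + p)).
Proof.
  apply typ_mut; intros *.
  - intros E k v D p Dv; rewrite subst_var; pose proof (E k) as Ek.
    destruct (Nat.eqb_spec k x) as [<-|Hkx].
    + rewrite Nat.ltb_irrefl, Nat.eqb_refl, ctx_single_same in *.
      apply (mtyp_perm Ek), mtyp_single_inv in Dv.
      rewrite E, ctx_del_single_eq, ctx_add_empty_l; eapply typ_mono; [exact Dv|lia].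
    + rewrite ctx_single_other in Ek by assumption.
      rewrite (mtyp_perm_nil Dv Ek), ctx_add_empty_r, E.
      destruct (Nat.ltb_spec x k); [|destruct (Nat.eqb_spec x k); [lia|]]; apply T_var;
        [rewrite ctx_del_single_lt by lia|rewrite ctx_del_single_gt by lia]; reflexivity.
  - intros Hc E k v D p Dv; rewrite subst_const.
    rewrite (mtyp_perm_nil Dv (E k)), ctx_add_empty_r, E, ctx_del_empty.
    apply T_const; auto; reflexivity.
  - intros Da IH P E L k v D p Dv; rewrite subst_lam.
    apply (mtyp_perm (E k)), (mtyp_lift 0) in Dv.
    eapply T_lam; [exact (IH (S k) (lift 0 v) _ _ Dv)| | |lia].
    + unfold ctx_add, ctx_del, ctx_ins; simpl; rewrite app_nil_r; exact P.
    + rewrite ctx_tail_add, ctx_tail_del_S, ctx_tail_ins_0, E; reflexivity.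
  - intros D1 IH1 D2 IH2 E L k v D p Dv; rewrite subst_app.
    apply (mtyp_perm (E k)), mtyp_app_inv in Dv as (D3 & D4 & p1 & p2 & Dv1 & Dv2 & ED & LD).
    eapply T_app; [exact (IH1 _ _ _ _ Dv1)|exact (IH2 _ _ _ _ Dv2)| |lia].
    rewrite E, ED, ctx_del_add; apply ctx_add_interchange.
  - intros E k v D p Dv.
    rewrite (mtyp_perm_nil Dv (E k)), ctx_add_empty_r, E, ctx_del_empty; apply MT_nil; reflexivity.
  - intros D1 IH1 D2 IH2 E L k v D p Dv.
    apply (mtyp_perm (E k)), mtyp_app_inv in Dv as (D3 & D4 & p1 & p2 & Dv1 & Dv2 & ED & LD).
    eapply MT_cons; [exact (IH1 _ _ _ _ Dv1)|exact (IH2 _ _ _ _ Dv2)| |lia].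
    rewrite E, ED, ctx_del_add; apply ctx_add_interchange.
Qed.

Lemma typ_unsubst_var G k v x s n : typ G (subst k v (Var _ x)) s n ->
  exists G1 D n1 p, typ G1 (Var _ x) s n1 /\ mtyp D v (G1 k) p /\ ctx_eq G (ctx_add (ctx_del k G1) D).
Proof.
  rewrite subst_var; intro Dt.
  destruct (Nat.eqb_spec x k) as [->|Hxk].
  - rewrite Nat.ltb_irrefl in Dt.
    exists (ctx_single k s), G, 0, n; split; [apply T_var; reflexivity|split].
    + rewrite ctx_single_same; apply mtyp_single, Dt.
    + rewrite ctx_del_single_eq, ctx_add_empty_l; reflexivity.
  - exists (ctx_single x s), ctx_empty, n, 0; split; [apply T_var; reflexivity|split].
    + rewrite ctx_single_other by auto; apply MT_nil; reflexivity.
    + rewrite ctx_add_empty_r; destruct (Nat.ltb_spec x k) as [Hlt|Hge].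
      * rewrite ctx_del_single_lt by exact Hlt; exact (typ_var_inv Dt).
      * rewrite ctx_del_single_gt by lia; exact (typ_var_inv Dt).
Qed.

Lemma typ_unsubst_mut :
  (forall G t s n, typ G t s n -> forall k v r, t = subst k v r ->
     exists G1 D n1 p, typ G1 r s n1 /\ mtyp D v (G1 k) p /\ ctx_eq G (ctx_add (ctx_del k G1) D)) /\
  (forall G u M n, mtyp G u M n -> forall k v r, u = subst k v r ->
     exists G1 D n1 p, mtyp G1 r M n1 /\ mtyp D v (G1 k) p /\ ctx_eq G (ctx_add (ctx_del k G1) D)).
Proof.
  apply typ_mut;
    [ intros G x s n E | intros G c s n Hc E | intros G G' a M s m n Da IH P E L
    | intros G G1 G2 f u M s m1 m2 n D1 IH1 D2 IH2 E L | intros G u n E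
    | intros G G1 G2 u s M m1 m2 n D1 IH1 D2 IH2 E L ];
    intros k v r H;
    [destruct r as [c'|y|r1 r2|b]; rewrite ?subst_const, ?subst_app, ?subst_lam in H; try discriminate;
     try (apply (@typ_unsubst_var _ _ _ _ _ n); rewrite <- H; econstructor; eassumption)..| |].
  - injection H as ->; exists ctx_empty, ctx_empty, n, 0; split; [apply T_const; auto; reflexivity|split].
    + apply MT_nil; reflexivity.
    + rewrite E, ctx_del_empty, ctx_add_empty_l; reflexivity.
  - injection H as H; destruct (IH _ _ _ H) as (G1 & D & n1 & p & Db & Dv & E1).
    apply mtyp_unlift in Dv as (D0 & ED & Dv).
    exists (ctx_tail G1), D0, (S n1), p; split; [|split; [exact Dv|]].
    + eapply T_lam; [exact Db| |reflexivity|lia].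
      rewrite P, (E1 0); unfold ctx_add; rewrite (ED 0); unfold ctx_del, ctx_ins; simpl.
      rewrite app_nil_r; reflexivity.
    + rewrite E, E1, ED, ctx_tail_add, ctx_tail_del_S, ctx_tail_ins_0; reflexivity.
  - injection H as H1 H2.
    destruct (IH1 _ _ _ H1) as (G3 & D3 & n3 & p3 & Dr1 & Dv1 & E1).
    destruct (IH2 _ _ _ H2) as (G4 & D4 & n4 & p4 & Dr2 & Dv2 & E2).
    exists (ctx_add G3 G4), (ctx_add D3 D4), (S (n3 + n4)), (p3 + p4); split; [|split].
    + eapply T_app; eauto; reflexivity.
    + apply mtyp_app; assumption.
    + rewrite E, E1, E2, ctx_del_add; apply ctx_add_interchange.
  - exists ctx_empty, ctx_empty, 0, 0; split; [apply MT_nil; reflexivity|split].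
    + apply MT_nil; reflexivity.
    + rewrite E, ctx_del_empty, ctx_add_empty_l; reflexivity.
  - destruct (IH1 _ _ _ H) as (G3 & D3 & n3 & p3 & Dr1 & Dv1 & E1).
    destruct (IH2 _ _ _ H) as (G4 & D4 & n4 & p4 & Dr2 & Dv2 & E2).
    exists (ctx_add G3 G4), (ctx_add D3 D4), (n3 + n4), (p3 + p4); split; [|split].
    + eapply MT_cons; eauto; reflexivity.
    + apply mtyp_app; assumption.
    + rewrite E, E1, E2, ctx_del_add; apply ctx_add_interchange.
Qed.

(** * Reduction and expansion *)

Lemma typ_redex_contract G a u s n : typ G (App (Lam a) u) s n ->
  exists n', n' < n /\ typ G (subst 0 u a) s n'.
Proof.
  intro D; apply typ_app_inv in D as (G1 & G2 & M & n1 & n2 & D1 & D2 & E & L).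
  apply typ_lam_inv in D1 as (G' & M' & s' & n' & Heq & Da & P & E1 & L1).
  injection Heq as -> ->; apply (mtyp_perm P) in D2.
  exists (n' + n2); split; [lia|].
  rewrite E, E1, <- ctx_del_0; exact (proj1 typ_subst_mut _ _ _ _ Da 0 u _ _ D2).
Qed.

Lemma typ_redex_expand G a u s n : typ G (subst 0 u a) s n ->
  exists n', typ G (App (Lam a) u) s n'.
Proof.
  intro D; destruct (proj1 typ_unsubst_mut _ _ _ _ D 0 u a eq_refl) as (G1 & D1 & n1 & p & Da & Du & E).
  exists (S (S n1 + p)); eapply T_app with (G1 := ctx_tail G1) (m1 := S n1); [|exact Du| |lia].
  - eapply T_lam; [exact Da|reflexivity|reflexivity|lia].
  - rewrite E, ctx_del_0; reflexivity.
Qed.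

Lemma mtyp_preserve (u u' : term) : (forall G s n, typ G u s n -> typ G u' s n) ->
  forall M G n, mtyp G u M n -> mtyp G u' M n.
Proof.
  intros H M; induction M as [|s M IH]; intros G n D.
  - apply MT_nil; exact (mtyp_nil_inv D).
  - apply mtyp_cons_inv in D as (G1 & G2 & n1 & n2 & D1 & D2 & E & L).
    eapply MT_cons; [apply H, D1|apply IH, D2|exact E|exact L].
Qed.

Lemma mtyp_transfer (u u' : term) N :
  (forall G s n, n <= N -> typ G u s n -> exists m, typ G u' s m) ->
  forall M G n, n <= N -> mtyp G u M n -> exists m, mtyp G u' M m.
Proof.
  intros H M; induction M as [|s M IH]; intros G n LN D.
  - exists 0; apply MT_nil; exact (mtyp_nil_inv D).
  - apply mtyp_cons_inv in D as (G1 & G2 & n1 & n2 & D1 & D2 & E & L).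
    destruct (H _ _ n1 ltac:(lia) D1) as (m1 & D1').
    destruct (IH _ n2 ltac:(lia) D2) as (m2 & D2').
    exists (m1 + m2); eapply MT_cons; eauto.
Qed.

Lemma typ_compat_reduction (R : term -> term -> Prop) :
  (forall t t' G s n, R t t' -> typ G t s n -> typ G t' s n) ->
  forall t t', compat R t t' -> forall G s n, typ G t s n -> typ G t' s n.
Proof.
  intros HR t t' Hc; induction Hc as [t t' Ht|f f' u u' _ IH B|u u' f f' B _ IH|a a' _ IH];
    intros G s n D.
  - eapply HR; eauto.
  - apply typ_app_inv in D as (G1 & G2 & M & n1 & n2 & D1 & D2 & E & L).
    eapply T_app; [apply IH, D1|exact (mtyp_bisim B D2)|exact E|exact L].
  - apply typ_app_inv in D as (G1 & G2 & M & n1 & n2 & D1 & D2 & E & L).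
    eapply T_app; [exact (typ_bisim B D1)|exact (mtyp_preserve IH D2)|exact E|exact L].
  - apply typ_lam_inv in D as (G' & M & s' & n' & -> & Da & P & E & L).
    eapply T_lam; [apply IH, Da|exact P|exact E|exact L].
Qed.

Lemma typ_compat_expansion (R : term -> term -> Prop) :
  (forall t t' G s n, R t t' -> typ G t' s n -> exists n', typ G t s n') ->
  forall t t', compat R t t' -> forall G s n, typ G t' s n -> exists n', typ G t s n'.
Proof.
  intros HR t t' Hc; induction Hc as [t t' Ht|f f' u u' _ IH B|u u' f f' B _ IH|a a' _ IH];
    intros G s n D.
  - eapply HR; eauto.
  - apply typ_app_inv in D as (G1 & G2 & M & n1 & n2 & D1 & D2 & E & L).
    destruct (IH _ _ _ D1) as (n1' & D1').
    exists (S (n1' + n2)); eapply T_app; [exact D1'|exact (mtyp_bisim (bisim_sym B) D2)|exact E|lia].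
  - apply typ_app_inv in D as (G1 & G2 & M & n1 & n2 & D1 & D2 & E & L).
    destruct (mtyp_transfer (N := n2) (fun G s k _ => IH G s k) (le_n _) D2) as (m & D2').
    exists (S (n1 + m)); eapply T_app; [exact (typ_bisim (bisim_sym B) D1)|exact D2'|exact E|lia].
  - apply typ_lam_inv in D as (G' & M & s' & n' & -> & Da & P & E & L).
    destruct (IH _ _ _ Da) as (m & Da'); exists (S m); eapply T_lam; eauto.
Qed.

Inductive head_step : term -> term -> Prop :=
| hs_beta a u : head_step (App (Lam a) u) (subst 0 u a)
| hs_app f f' u : head_step f f' -> head_step (App f u) (App f' u)
| hs_lam a a' : head_step a a' -> head_step (Lam a) (Lam a').

Lemma head_step_beta t t' : head_step t t' -> beta_step t t'.
Proof.
  induction 1.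
  - apply cp_base; exists a, u; split; apply bisim_refl.
  - apply cp_appl; [assumption|apply bisim_refl].
  - apply cp_lam; assumption.
Qed.

Lemma typ_head_step t t' : head_step t t' ->
  forall G s n, typ G t s n -> exists n', n' < n /\ typ G t' s n'.
Proof.
  induction 1 as [a u|f f' u _ IH|a a' _ IH]; intros G s n D.
  - exact (typ_redex_contract D).
  - apply typ_app_inv in D as (G1 & G2 & M & n1 & n2 & D1 & D2 & E & L).
    destruct (IH _ _ _ D1) as (n1' & L1 & D1').
    exists (S (n1' + n2)); split; [lia|eapply T_app; eauto].
  - apply typ_lam_inv in D as (G' & M & s' & n' & -> & Da & P & E & L).
    destruct (IH _ _ _ Da) as (m & L1 & Da').
    exists (S m); split; [lia|eapply T_lam; eauto].
Qed.

Lemma typ_progress G t s n : typ G t s n -> is_hnf bot t \/ exists t', head_step t t'.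
Proof.
  induction 1 as [G x| G c s n Hc _ | G G' a M s m n _ IH | G G1 G2 f u M s m1 m2 n _ IH].
  - left; apply hnf_head, ha_var.
  - left; apply hnf_head, ha_const, Hc.
  - destruct IH as [Ha|[a' Ha]]; [left; apply hnf_lam, Ha|right; exists (Lam a'); apply hs_lam, Ha].
  - destruct IH as [Hf|[f' Hf]]; [inversion Hf; subst|right; exists (App f' u); apply hs_app, Hf].
    + left; apply hnf_head, ha_app; assumption.
    + right; eexists; apply hs_beta.
Qed.

Lemma typ_has_hnf G t s n : typ G t s n -> has_hnf bot t.
Proof.
  revert G t s; induction n as [n IH] using (well_founded_induction lt_wf); intros G t s D.
  destruct (typ_progress D) as [H|[t' H]].
  - exists t; split; [apply star_refl, bisim_refl|exact H].
  - destruct (typ_head_step H D) as (n' & L & D').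
    destruct (IH _ L _ _ _ D') as (t'' & R & Ht'').
    exists t''; split; [eapply star_step; [apply head_step_beta, H|exact R]|exact Ht''].
Qed.

(* A typed term has a head normal form, so an [R_bot] step never fires inside a
   typed position. *)
Lemma typ_beta_bot_step t t' G s n : beta_bot_step bot t t' -> typ G t s n -> typ G t' s n.
Proof.
  intro H; revert H G s n; apply typ_compat_reduction.
  intros a b G s n [(a' & u & B1 & B2)|(Hn & _ & _)] D.
  - apply (typ_bisim B1), typ_redex_contract in D as (n' & L & D').
    eapply typ_mono; [exact (typ_bisim (bisim_sym B2) D')|lia].
  - exfalso; exact (Hn (typ_has_hnf D)).
Qed.

Lemma typ_beta_bot_star t t' G s n : beta_bot_star bot t t' -> typ G t s n -> typ G t' s n.
Proof.
  intro H; revert G s n; induction H as [t t' B|t u t' H _ IH]; intros G s n D.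
  - exact (typ_bisim B D).
  - exact (IH _ _ _ (typ_beta_bot_step H D)).
Qed.

Lemma typ_beta_expansion t t' G s n : beta_step t t' -> typ G t' s n -> exists n', typ G t s n'.
Proof.
  intro H; revert H G s n; apply typ_compat_expansion.
  intros a b G s n (a' & u & B1 & B2) D.
  apply (typ_bisim B2), typ_redex_expand in D as (n' & D').
  exists n'; exact (typ_bisim (bisim_sym B1) D').
Qed.

Lemma head_app_typ t : head_app bot t -> forall s, exists G n, typ G t s n.
Proof.
  induction 1 as [x|c Hc|f u _ IH]; intro s.
  - exists (ctx_single x s), 0; apply T_var; reflexivity.
  - exists ctx_empty, 0; apply T_const; [exact Hc|reflexivity].
  - destruct (IH (Arr [] s)) as (G & n & D); exists G, (S n).
    eapply T_app with (m2 := 0); [exact D|apply MT_nil; reflexivity| |lia].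
    symmetry; apply ctx_add_empty_r.
Qed.

Lemma hnf_typ t : is_hnf bot t -> exists G s n, typ G t s n.
Proof.
  induction 1 as [t H|a _ (G & s & n & D)].
  - destruct (head_app_typ H Base) as (G & n & D); eauto.
  - exists (ctx_tail G), (Arr (G 0) s), (S n); eapply T_lam; eauto; reflexivity.
Qed.

Lemma has_hnf_typ t : has_hnf bot t -> exists G s n, typ G t s n.
Proof.
  intros (t' & R & H); apply hnf_typ in H; induction R as [t t' B|t u t' Hb _ IH].
  - destruct H as (G & s & n & D); exists G, s, n; exact (typ_bisim (bisim_sym B) D).
  - destruct (IH H) as (G & s & n & D); destruct (typ_beta_expansion Hb D) as (n' & D'); eauto.
Qed.

(* Induction on the size of the derivation: each coinductive layer of [inf_red]
   is a finite [beta_bot_star] reduction followed by strictly smaller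
   derivations of the immediate subterms. *)
Lemma typ_inf_red G t s n : typ G t s n -> forall r, inf_red bot t r -> exists m, typ G r s m.
Proof.
  revert G t s; induction n as [n IH] using (well_founded_induction lt_wf); intros G t s D r Hr.
  destruct Hr as [t x R|t c R|t t1 t2 t1' t2' R R1 R2|t a a' R Ra];
    apply (typ_beta_bot_star R) in D.
  - exists n; exact D.
  - exists n; exact D.
  - apply typ_app_inv in D as (G1 & G2 & M & n1 & n2 & D1 & D2 & E & L).
    destruct (IH n1 ltac:(lia) _ _ _ D1 _ R1) as (m1 & D1').
    destruct (mtyp_transfer (N := n2) (fun G s k Lk Dk => IH k ltac:(lia) G t2 s Dk t2' R2)
                (le_n _) D2) as (m2 & D2').
    exists (S (m1 + m2)); eapply T_app; eauto.
  - apply typ_lam_inv in D as (G' & M & s' & n' & -> & Da & P & E & L).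
    destruct (IH n' L _ _ _ Da _ Ra) as (m & Da').
    exists (S m); eapply T_lam; eauto.
Qed.

End Typing.

Theorem corollary5p31 (C : Type) (bot : C) (s t : term C) :
  ~ has_hnf bot s -> inf_red bot t s -> ~ has_hnf bot t.
Proof.
  intros Hs Hr Ht.
  destruct (has_hnf_typ Ht) as (G & sg & n & D).
  destruct (typ_inf_red D Hr) as (m & D').
  exact (Hs (typ_has_hnf D')).
Qed.
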